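(* Let $F$ be an almost-bipartite graph. Every graph in $\mathcal{M}_F$ is either an empty (edgeless) graph, or a non-empty graph with fewer than $|F|$ vertices. In particular, up to isomorphism there are only finitely many non-empty graphs in $\mathcal{M}_F$.
   Context: All graphs are finite and simple. A graph $F$ is almost-bipartite if it can be made bipartite by removing at most one edge. For such $F$, $\mathcal{A}_F$ is the family of subgraphs of $F$ induced by $V(F)\setminus I$, where $I$ ranges over all maximal independent sets of $F$; $\mathcal{M}_F$ is the family of all graphs (possibly with isolated vertices) that contain no subgraph isomorphic to any member of $\mathcal{A}_F$. $|F|$ is the number of vertices of $F$. *)

From mathcomp Require Import all_boot.
Set Implicit Arguments. Unset Strict Implicit. Unset Printing Implicit Defensive.

Definition simple_graph (T : finType) (e : rel T) : Prop :=
  symmetric e /\ irreflexive e.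

Definition edgeless (T : finType) (e : rel T) : Prop :=
  forall x y, ~~ e x y.

(* Bipartite after deleting at most one edge: there is a 2-colouring c and a
   pair {u,v} such that every monochromatic edge is the edge uv. *)
Definition almost_bipartite (T : finType) (e : rel T) : Prop :=
  exists (c : T -> bool) (u v : T),
    forall x y, e x y -> c x = c y -> (x = u /\ y = v) \/ (x = v /\ y = u).

Definition independent (T : finType) (e : rel T) (I : {set T}) : Prop :=
  forall x y, x \in I -> y \in I -> ~~ e x y.

Definition maximal_independent (T : finType) (e : rel T) (I : {set T}) : Prop :=
  independent e I /\
  forall J : {set T}, independent e J -> I \subset J -> J = I.

(* G = (TG, eG) contains a subgraph isomorphic to the induced subgraph of
   (TF, eF) on S, i.e. there is an injective edge-preserving map from
   F[S] into G. *)
Definition contains_induced_copy (TF : finType) (eF : rel TF) (S : {set TF})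
    (TG : finType) (eG : rel TG) : Prop :=
  exists f : {x : TF | x \in S} -> TG,
    injective f /\
    forall x y : {x : TF | x \in S}, eF (val x) (val y) -> eG (f x) (f y).

(* G belongs to M_F: G contains no subgraph isomorphic to F[V(F) \ I]
   for any maximal independent set I of F. *)
Definition in_M (TF : finType) (eF : rel TF) (TG : finType) (eG : rel TG) : Prop :=
  forall I : {set TF}, maximal_independent eF I ->
    ~ contains_induced_copy eF (~: I) eG.

From mathcomp Require Import all_boot perm.

Set Implicit Arguments.
Unset Strict Implicit.
Unset Printing Implicit Defensive.

(* The vertices of F outside the colour class of u are independent; extend
   them to a maximal independent set I.  Then F - I lies inside the colour
   class of u, so its only possible edge is uv, and F - I embeds in any graph
   G with an edge ab and at least |F| vertices by sending u to a and v to b. *)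

Lemma leq_card_exists_inj (A B : finType) :
  #|A| <= #|B| -> exists f : A -> B, injective f.
Proof.
move=> leAB; exists (fun x => enum_val (widen_ord leAB (enum_rank x))).
by move=> x y /enum_val_inj [] /val_inj /enum_rank_inj.
Qed.

Lemma leq_card_exists_inj_pair (A B : finType) (u v : A) (a b : B) :
  #|A| <= #|B| -> u != v -> a != b ->
  exists f : A -> B, [/\ injective f, f u = a & f v = b].
Proof.
move=> leAB uv ab; have [g g_inj] := leq_card_exists_inj leAB.
pose h x := tperm (g u) a (g x).
have h_inj : injective h by move=> x y /perm_inj /g_inj.
have hva : h v != a.
  by rewrite -[a](tpermL (g u)) (inj_eq perm_inj) (inj_eq g_inj) eq_sym.
exists (fun x => tperm (h v) b (h x)); split.
- by move=> x y /perm_inj /h_inj.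
- by rewrite /h tpermL tpermD // eq_sym.
- by rewrite tpermL.
Qed.

Lemma independentP (T : finType) (e : rel T) (I : {set T}) :
  reflect (independent e I) [forall x in I, forall y in I, ~~ e x y].
Proof.
apply: (iffP forall_inP) => [indI x y xI yI | indI x xI].
  by move/forall_inP: (indI x xI); apply.
by apply/forall_inP => y; apply: indI.
Qed.

Lemma maximal_independent_exists (T : finType) (e : rel T) (S : {set T}) :
  independent e S -> exists2 I, maximal_independent e I & S \subset I.
Proof.
move=> /independentP indS.
have [I /maxsetP [/independentP indI maxI] SI] :=
  @maxset_exists _ (fun I => [forall x in I, forall y in I, ~~ e x y]) S indS.
by exists I => //; split=> // J /independentP; apply: maxI.
Qed.

Lemma edgeless_or_edge (T : finType) (e : rel T) :
  edgeless e \/ exists a b, e a b.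
Proof.
have [/existsP [a /existsP [b eab]]|noedge] := boolP [exists a, exists b, e a b].
  by right; exists a, b.
left => x y; apply: contraNN noedge => exy.
by apply/existsP; exists x; apply/existsP; exists y.
Qed.

Section AlmostBipartite.

Variables (T : finType) (e : rel T) (c : T -> bool) (u v : T).
Hypothesis mono_edge :
  forall x y, e x y -> c x = c y -> (x = u /\ y = v) \/ (x = v /\ y = u).

Lemma independent_other_colour_class : independent e [set x | c x != c u].
Proof.
move=> x y; rewrite !inE => cxu cyu; apply/negP => exy.
have cxy : c x = c y by move: cxu cyu; case: (c x); case: (c y); case: (c u).
by case: (mono_edge exy cxy) => -[xu yv]; rewrite ?xu ?yv eqxx in cxu cyu.
Qed.

Lemma uv_only_edge_in_setC (I : {set T}) : [set x | c x != c u] \subset I ->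
  forall x y, x \in ~: I -> y \in ~: I -> e x y ->
  (x = u /\ y = v) \/ (x = v /\ y = u).
Proof.
move=> /subsetP sub.
have colour_u z : z \in ~: I -> c z = c u.
  by rewrite inE; apply: contraNeq => czu; apply: sub; rewrite inE.
move=> x y xI yI exy; apply: mono_edge exy _.
by rewrite (colour_u x) ?(colour_u y).
Qed.

End AlmostBipartite.

Lemma contains_copy_of_edge (TF TG : finType) (eF : rel TF) (eG : rel TG)
    (S : {set TF}) (u v : TF) (a b : TG) :
  irreflexive eF -> simple_graph eG -> eG a b -> #|TF| <= #|TG| ->
  (forall x y, x \in S -> y \in S -> eF x y ->
     (x = u /\ y = v) \/ (x = v /\ y = u)) ->
  contains_induced_copy eF S eG.
Proof.
move=> irrF [symG irrG] eab leFG edgeS.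
have [eq_uv|uv] := eqVneq u v.
  have [f f_inj] := leq_card_exists_inj leFG.
  exists (f \o val); split=> [x y /f_inj /val_inj //|[x xS] [y yS] /= exy].
  by case: (edgeS x y xS yS exy) => -[xu yv]; move: exy; rewrite xu yv eq_uv irrF.
have ab : a != b by apply: contraTneq eab => ->; rewrite irrG.
have [f [f_inj fu fv]] := leq_card_exists_inj_pair leFG uv ab.
exists (f \o val); split=> [x y /f_inj /val_inj //|[x xS] [y yS] /= exy].
by case: (edgeS x y xS yS exy) => -[-> ->]; rewrite fu fv // symG.
Qed.

Theorem lemma4p1 (TF : finType) (eF : rel TF)
    (hF : simple_graph eF) (habF : almost_bipartite eF)
    (TG : finType) (eG : rel TG) (hG : simple_graph eG)
    (hM : in_M eF eG) :
  edgeless eG \/ (~ edgeless eG /\ #|TG| < #|TF|).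
Proof.
have [|[a [b eab]]] := edgeless_or_edge eG; [by left | right; split].
  by move/(_ a b); rewrite eab.
rewrite ltnNge; apply/negP => leFG.
have [c [u [v mono_edge]]] := habF.
have [I maxI sub] :=
  maximal_independent_exists (independent_other_colour_class mono_edge).
apply: (hM I maxI); apply: (contains_copy_of_edge _ hG eab leFG).
  by case: hF.
exact: uv_only_edge_in_setC mono_edge I sub.
Qed.
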